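(* Let $M_I$ and $N_J$ be factor systems and assume Condition (D). For all $\zeta,\zeta'\in\mathrm{elem}([M_I\to N_J])$: if $\zeta(\alpha)=\zeta'(\alpha)$ for all $\alpha\in\mathrm{elem}(M_I)$, then $\zeta=\zeta'$.
   Context: For every non-empty directed preordered set $I$ a family $\mathcal F(I)$ of subsets of $I$ is fixed such that every member is cofinal, $\mathcal F(I)$ is closed under supersets and finite intersections, and it contains every non-empty upward closed subset. Condition (D): for all such $I,J$, if $H\in\mathcal F(I\times J)$ (product order) and $I'\in\mathcal F(I)$, then $H[I']:=\{j\in J\mid\exists i\in I',\ (i,j)\in H\}\in\mathcal F(J)$. A system $(M_I,\triangleright)$: pairwise disjoint sets $M_i$ with relations $\triangleright\subseteq M_{i'}\times M_i$ ($i\le i'$), reflexive for $i=i'$; $a_i\approx b_j$ iff some $c\in M_{i'}$, $i'\ge i,j$, has $c\triangleright a_i$, $c\triangleright b_j$; prefactor system: $a_{i'}\approx a_i\iff a_{i'}\triangleright a_i$. A factor system is a prefactor system with $\approx$-preserving maps $emb_{i,i'}:M_i\to M_{i'}$, $proj_{i',i}:M_{i'}\to M_i$ ($i\le i'$) such that $emb_{i,i}(a)\approx a$, $proj_{i,i}(a)\approx a$, $emb_{i',i''}(emb_{i,i'}(a))\approx emb_{i,i''}(a)$, $proj_{i',i}(proj_{i'',i'}(a))\approx proj_{i'',i}(a)$, $proj_{i',i}(emb_{i,i'}(a))\approx a$, and for $i\le i'\le i''$: $a_{i'}\triangleright a_i\Rightarrow emb_{i',i''}(a_{i'})\triangleright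 a_i$ and $a_{i''}\triangleright a_i\Rightarrow proj_{i'',i'}(a_{i''})\triangleright a_i$. The function space $[M_I\to N_J]$ is indexed by $I\times J$ (indices written $i\to j$), with states $[M_i\to N_j]$ = all $\approx$-preserving functions $M_i\to N_j$, and $f'\triangleright f$ (for $i\to j\le i'\to j'$) iff $a_{i'}\triangleright a_i$ implies $f'(a_{i'})\triangleright f(a_i)$; embeddings $f\mapsto emb_{j,j'}\circ f\circ proj_{i',i}$, projections $f'\mapsto proj_{j',j}\circ f'\circ emb_{i,i'}$. A consistent set in a system is $\alpha\subseteq\bigcup_iM_i$ such that $a_{i'}\triangleright a_i$ for all $a_{i'},a_i\in\alpha$ with $i'\ge i$, and $\{i\mid\alpha\cap M_i\ne\emptyset\}\in\mathcal F(I)$; $\mathrm{elem}(M_I)$ is the set of inclusion-maximal consistent sets. For a consistent set $\zeta$ of $[M_I\to N_J]$ and a consistent set $\alpha$ of $M_I$, $\zeta(\alpha):=\{f(a_i)\mid f\in\zeta\cap[M_i\to N_j]\text{ for some }j,\ a_i\in\alpha\cap M_i\}$. *)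

Record DirSet := {
  dcar :> Type;
  dle : dcar -> dcar -> Prop;
  dle_refl : forall i, dle i i;
  dle_trans : forall i j k, dle i j -> dle j k -> dle i k;
  d_nonempty : exists i : dcar, True;
  d_directed : forall i j, exists k, dle i k /\ dle j k
}.
Arguments dle {d} _ _.

Definition prodD (I J : DirSet) : DirSet.
Proof.
  refine {| dcar := (dcar I * dcar J)%type;
            dle := fun p q => dle (fst p) (fst q) /\ dle (snd p) (snd q) |}.
  - intros [i j]; split; apply dle_refl.
  - intros [i j] [i' j'] [i'' j''] [H1 H2] [H3 H4]; split; eapply dle_trans; eauto.
  - destruct (d_nonempty I) as [i _]; destruct (d_nonempty J) as [j _].
    exists (i, j); exact Logic.I.
  - intros [i j] [i' j'].
    destruct (d_directed I i i') as [k [Hk1 Hk2]].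
    destruct (d_directed J j j') as [l [Hl1 Hl2]].
    exists (k, l); simpl; tauto.
Defined.

Definition Fam := forall D : DirSet, (dcar D -> Prop) -> Prop.

Definition cofinal (D : DirSet) (H : D -> Prop) : Prop :=
  forall i : D, exists i', dle i i' /\ H i'.

Definition Fam_ok (F : Fam) : Prop :=
  (forall (D : DirSet) H, F D H -> cofinal D H) /\
  (forall (D : DirSet) (H H' : D -> Prop), F D H -> (forall i, H i -> H' i) -> F D H') /\
  (forall (D : DirSet) (H H' : D -> Prop), F D H -> F D H' -> F D (fun i => H i /\ H' i)) /\
  (forall (D : DirSet) (H : D -> Prop), (exists i, H i) ->
       (forall i i', H i -> dle i i' -> H i') -> F D H).

Definition condD (F : Fam) : Prop :=
  forall (I J : DirSet) (H : prodD I J -> Prop) (I' : I -> Prop),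
    F (prodD I J) H -> F I I' ->
    F J (fun j => exists i, I' i /\ H (i, j)).

(** A system over D: pairwise disjoint state sets (a dependent family, so
    disjointness is automatic) with relations tri i' i  (meaningful for i <= i'). *)
Record System (D : DirSet) := {
  st : D -> Type;
  tri : forall i' i : D, st i' -> st i -> Prop
}.
Arguments st {D} _ _.
Arguments tri {D} _ {i' i} _ _.

Definition is_system {D} (S : System D) : Prop :=
  forall i (a : st S i), tri S a a.

Definition approx {D} (S : System D) {i j : D} (a : st S i) (b : st S j) : Prop :=
  exists (i' : D) (c : st S i'), dle i i' /\ dle j i' /\ tri S c a /\ tri S c b.

Definition is_prefactor {D} (S : System D) : Prop :=
  is_system S /\
  forall (i i' : D) (a' : st S i') (a : st S i), dle i i' ->
    (approx S a' a <-> tri S a' a).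

Definition approx_pres {D E} (S : System D) (T : System E) {i : D} {j : E}
  (f : st S i -> st T j) : Prop :=
  forall a b : st S i, approx S a b -> approx T (f a) (f b).

Record FactorSystem (D : DirSet) := {
  fs_sys :> System D;
  emb : forall i i' : D, dle i i' -> st fs_sys i -> st fs_sys i';
  proj : forall i i' : D, dle i i' -> st fs_sys i' -> st fs_sys i;
  fs_prefactor : is_prefactor fs_sys;
  emb_pres : forall i i' (h : dle i i'), approx_pres fs_sys fs_sys (emb i i' h);
  proj_pres : forall i i' (h : dle i i'), approx_pres fs_sys fs_sys (proj i i' h);
  emb_id : forall i (h : dle i i) a, approx fs_sys (emb i i h a) a;
  proj_id : forall i (h : dle i i) a, approx fs_sys (proj i i h a) a;
  emb_comp : forall i i' i'' (h1 : dle i i') (h2 : dle i' i'') (h3 : dle i i'') a,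
      approx fs_sys (emb i' i'' h2 (emb i i' h1 a)) (emb i i'' h3 a);
  proj_comp : forall i i' i'' (h1 : dle i i') (h2 : dle i' i'') (h3 : dle i i'') a,
      approx fs_sys (proj i i' h1 (proj i' i'' h2 a)) (proj i i'' h3 a);
  proj_emb : forall i i' (h1 h2 : dle i i') a,
      approx fs_sys (proj i i' h2 (emb i i' h1 a)) a;
  emb_tri : forall i i' i'' (h1 : dle i i') (h2 : dle i' i'')
      (a' : st fs_sys i') (a : st fs_sys i),
      tri fs_sys a' a -> tri fs_sys (emb i' i'' h2 a') a;
  proj_tri : forall i i' i'' (h1 : dle i i') (h2 : dle i' i'')
      (a'' : st fs_sys i'') (a : st fs_sys i),
      tri fs_sys a'' a -> tri fs_sys (proj i' i'' h2 a'') a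
}.
Arguments fs_sys {D} _.

(** Function space [M_I -> N_J] (only its system structure is needed):
    indexed by I x J, states at (i,j) are the approx-preserving maps
    M_i -> N_j, and f' |> f iff a' |> a implies f' a' |> f a. *)
Definition fun_state {I J} (M : System I) (N : System J) (p : prodD I J) : Type :=
  { f : st M (fst p) -> st N (snd p) | approx_pres M N f }.

Definition FunSpace {I J} (M : System I) (N : System J) : System (prodD I J) :=
  {| st := fun_state M N;
     tri := fun p' p (f' : fun_state M N p') (f : fun_state M N p) =>
       forall (a' : st M (fst p')) (a : st M (fst p)),
         tri M a' a -> tri N (proj1_sig f' a') (proj1_sig f a) |}.

Definition elt {D} (S : System D) : Type := { i : D & st S i }.

Definition consistent (F : Fam) {D} (S : System D) (al : elt S -> Prop) : Prop :=
  (forall x y : elt S, al x -> al y -> dle (projT1 y) (projT1 x) ->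
       tri S (projT2 x) (projT2 y)) /\
  F D (fun i => exists a : st S i, al (existT _ i a)).

Definition is_elem (F : Fam) {D} (S : System D) (al : elt S -> Prop) : Prop :=
  consistent F S al /\
  forall be : elt S -> Prop, consistent F S be ->
    (forall x, al x -> be x) -> forall x, be x -> al x.

Definition app {I J} {M : System I} {N : System J}
  (ze : elt (FunSpace M N) -> Prop) (al : elt M -> Prop) : elt N -> Prop :=
  fun x => exists (i : I) (j : J) (f : fun_state M N (i, j)) (a : st M i),
    ze (existT _ (i, j) f) /\ al (existT _ i a) /\
    x = existT _ j (proj1_sig f a).

From Stdlib Require Import Classical.
From mathcomp Require classical_sets.

(* By maximality of [ze'] it suffices that [ze \/ ze'] is still consistent,
   i.e. that [f' a' |> f a] whenever [f, f'] lie in [ze \/ ze'] and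
   [a' |> a].  Put [a] and [a'] into one element [al] of [elem M] (extend
   [{a, a'}] together with the embeddings of [a'] by Zorn's lemma); then
   [f' a'] and [f a] both lie in [ze al = ze' al].  Condition (D) yields, for
   any two points of [ze al], a third point of [ze al] dominating both, so
   [ze al] is itself consistent and [f' a' |> f a]. *)

Definition coherent {D} (S : System D) (al : elt S -> Prop) : Prop :=
  forall x y : elt S, al x -> al y -> dle (projT1 y) (projT1 x) ->
    tri S (projT2 x) (projT2 y).

Definition support {D} (S : System D) (al : elt S -> Prop) (i : D) : Prop :=
  exists a : st S i, al (existT _ i a).

Lemma coherent_sub {D} (S : System D) (al be : elt S -> Prop) :
  coherent S be -> (forall x, al x -> be x) -> coherent S al.
Proof. intros Hbe Hsub x y Hx Hy. apply Hbe; auto. Qed.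

Section Prefactor.
Context {D : DirSet} (S : System D) (S_pre : is_prefactor S).

Lemma tri_refl i (a : st S i) : tri S a a.
Proof. exact (proj1 S_pre i a). Qed.

Lemma tri_of_approx i i' (a' : st S i') (a : st S i) :
  dle i i' -> approx S a' a -> tri S a' a.
Proof. intro Hii'. apply (proj2 S_pre i i' a' a Hii'). Qed.

Lemma coherent_of_pairwise_approx (al : elt S -> Prop) :
  (forall x y, al x -> al y -> approx S (projT2 x) (projT2 y)) -> coherent S al.
Proof. intros Happ x y Hx Hy Hyx. apply tri_of_approx; auto. Qed.

End Prefactor.

Lemma emb_tri_emb {D} (M : FactorSystem D) i k k'
    (h : dle i k) (h' : dle i k') (hk : dle k k') (a : st M i) :
  tri M (emb _ M i k' h' a) (emb _ M i k h a).
Proof.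
  pose proof (fs_prefactor _ M) as M_pre.
  set (e := emb _ M i k h a).
  apply tri_of_approx; [exact M_pre | exact hk |].
  exists k', (emb _ M k k' hk e).
  repeat split; [apply dle_refl | exact hk | |].
  - apply tri_of_approx; [exact M_pre | apply dle_refl | apply emb_comp].
  - apply (emb_tri _ M k k k' (dle_refl _ k) hk). apply tri_refl, M_pre.
Qed.

Section Elements.
Context (F : Fam) (HF : Fam_ok F).

Lemma fam_superset (D : DirSet) (H H' : D -> Prop) :
  F D H -> (forall i, H i -> H' i) -> F D H'.
Proof. apply (proj1 (proj2 HF)). Qed.

Lemma fam_up (D : DirSet) (i : D) : F D (fun k => dle i k).
Proof.
  apply (proj2 (proj2 (proj2 HF))).
  - exists i. apply dle_refl.
  - intros k k' Hk Hkk'. eapply dle_trans; eauto.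
Qed.

Lemma fam_restrict_up (D : DirSet) (H : D -> Prop) (i : D) :
  F D H -> F D (fun k => H k /\ dle i k).
Proof. intro HH. apply (proj1 (proj2 (proj2 HF))); [exact HH | apply fam_up]. Qed.

Lemma fam_support_sub {D} (S : System D) (al be : elt S -> Prop) :
  F D (support S al) -> (forall x, al x -> be x) -> F D (support S be).
Proof.
  intros al_F Hsub. apply (fam_superset _ _ _ al_F).
  intros i [a Ha]. exists a. auto.
Qed.

(* Zorn's lemma is applied to the sets [X] with [X \/ b0] coherent, so that
   the union of the empty chain is admissible. *)
Lemma consistent_extends_to_elem {D} (S : System D) (b0 : elt S -> Prop) :
  consistent F S b0 -> exists al, is_elem F S al /\ forall x, b0 x -> al x.
Proof.
  intros [b0_coh b0_F].
  pose (P := fun X : elt S -> Prop => coherent S (fun x => X x \/ b0 x)).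
  destruct (@classical_sets.Zorn_bigcup _ P) as [A [PA A_max]].
  - intros C C_P C_chain x y Hx Hy.
    destruct Hx as [[X CX Xx] | bx]; destruct Hy as [[Y CY Yy] | by0].
    + destruct (C_chain X Y CX CY) as [XY | YX].
      * apply (C_P Y CY); left; auto.
      * apply (C_P X CX); left; auto.
    + apply (C_P X CX); auto.
    + apply (C_P Y CY); auto.
    + apply b0_coh; auto.
  - exists (fun x => A x \/ b0 x). split; [split; [split|] |].
    + exact PA.
    + apply (fam_support_sub S b0 (fun x => A x \/ b0 x)); auto.
    + intros be [be_coh _] Hsub x Hx. apply NNPP. intro Hnx.
      apply (A_max be).
      * split; [intros y Ay; apply Hsub; auto |].
        intro beA. apply Hnx. left. apply beA, Hx.
      * apply coherent_sub with be; [exact be_coh |].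
        intros y [Ay | by0]; auto.
    + auto.
Qed.

Lemma elem_absorbs {D} (S : System D) (al be : elt S -> Prop) :
  is_elem F S al -> coherent S (fun x => be x \/ al x) ->
  forall x, be x -> al x.
Proof.
  intros [[_ al_F] al_max] Hcoh x Hx.
  apply (al_max (fun x => be x \/ al x)); auto.
  split; [exact Hcoh |]. apply (fam_support_sub S al (fun x => be x \/ al x)); auto.
Qed.

Lemma tri_in_elem {D} (M : FactorSystem D) i i' (a : st M i) (a' : st M i') :
  dle i i' -> tri M a' a ->
  exists al, is_elem F M al /\ al (existT _ i a) /\ al (existT _ i' a').
Proof.
  intros Hii' Ha'a.
  pose proof (fs_prefactor _ M) as M_pre.
  pose (seed := fun x : elt M => x = existT _ i a \/ x = existT _ i' a' \/
          exists k (h : dle i' k), x = existT _ k (emb _ M i' k h a')).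
  assert (seed_dominated : forall x, seed x -> forall k (h : dle i' k),
            dle (projT1 x) k -> tri M (emb _ M i' k h a') (projT2 x)).
  { intros x [-> | [-> | [m [hm ->]]]] k h Hk; simpl in *.
    - exact (emb_tri _ M i i' k Hii' h a' a Ha'a).
    - exact (emb_tri _ M i' i' k (dle_refl _ i') h a' a' (tri_refl _ M_pre _ a')).
    - exact (emb_tri_emb M i' m k hm h Hk a'). }
  destruct (consistent_extends_to_elem M seed) as [al [Hal seed_al]].
  - split.
    + apply coherent_of_pairwise_approx; [exact M_pre |].
      intros x y Hx Hy.
      destruct (d_directed D (projT1 x) (projT1 y)) as [k0 [Hxk0 Hyk0]].
      destruct (d_directed D k0 i') as [k [Hk0k Hi'k]].
      exists k, (emb _ M i' k Hi'k a').
      repeat split; try (eapply dle_trans; eauto);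
        apply seed_dominated; auto; eapply dle_trans; eauto.
    + apply fam_superset with (fun k => dle i' k); [apply fam_up |].
      intros k Hk. exists (emb _ M i' k Hk a'). right; right. exists k, Hk. reflexivity.
  - exists al. split; [exact Hal |]. split; apply seed_al; unfold seed; auto.
Qed.

End Elements.

Section FunctionSpace.
Context (F : Fam) (HF : Fam_ok F) (HD : condD F).
Context {I J : DirSet} (M : System I) (N : System J).

Lemma joint_support_cofinal (ze : elt (FunSpace M N) -> Prop) (al : elt M -> Prop) :
  F (prodD I J) (support _ ze) -> F I (support M al) ->
  forall k l, exists i j (g : fun_state M N (i, j)) (b : st M i),
    dle k i /\ dle l j /\ ze (existT _ (i, j) g) /\ al (existT _ i b).
Proof.
  intros ze_F al_F k l.
  pose proof (HD I J _ _ (fam_restrict_up F HF (prodD I J) _ (k, l) ze_F)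
                         (fam_restrict_up F HF _ _ k al_F)) as HD_F.
  destruct (proj1 HF _ _ HD_F l) as [j [Hlj [i [[[b Hb] Hki] [[g Hg] _]]]]].
  exists i, j, g, b. auto.
Qed.

Lemma app_coherent (N_pre : is_prefactor N) ze al :
  consistent F (FunSpace M N) ze -> consistent F M al -> coherent N (app ze al).
Proof.
  intros [ze_coh ze_F] [al_coh al_F] x y
    [k [l [g [b [Hg [Hb ->]]]]]] [k' [l' [g' [b' [Hg' [Hb' ->]]]]]] Hl'l.
  simpl in *.
  destruct (d_directed I k k') as [k0 [Hk Hk']].
  destruct (joint_support_cofinal ze al ze_F al_F k0 l)
    as [i [j [g0 [b0 [Hk0i [Hlj [Hg0 Hb0]]]]]]].
  assert (dominates : forall m n (h : fun_state M N (m, n)) (c : st M m),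
            ze (existT _ (m, n) h) -> al (existT _ m c) -> dle m k0 -> dle n j ->
            tri N (proj1_sig g0 b0) (proj1_sig h c)).
  { intros m n h c Hh Hc Hm Hn.
    assert (Hmi : dle m i) by (eapply dle_trans; eauto).
    apply (ze_coh _ _ Hg0 Hh (conj Hmi Hn)).
    exact (al_coh _ _ Hb0 Hc Hmi). }
  apply tri_of_approx; [exact N_pre | exact Hl'l |].
  exists j, (proj1_sig g0 b0).
  repeat split; [exact Hlj | eapply dle_trans; eauto | |]; apply dominates; auto.
  eapply dle_trans; eauto.
Qed.

End FunctionSpace.

Lemma funspace_union_coherent (F : Fam) (HF : Fam_ok F) (HD : condD F)
    {I J : DirSet} (M : FactorSystem I) (N : FactorSystem J)
    (ze ze' : elt (FunSpace M N) -> Prop) :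
  consistent F (FunSpace M N) ze ->
  (forall al, is_elem F M al -> forall x, app ze' al x -> app ze al x) ->
  coherent (FunSpace M N) (fun z => ze z \/ ze' z).
Proof.
  intros ze_cons Happ [[i' j'] f'] [[i j] f] Hf' Hf [Hii' Hjj'] a' a Ha'a.
  simpl in *.
  destruct (tri_in_elem F HF M i i' a a' Hii' Ha'a) as [al [Hal [Ha Ha']]].
  assert (in_app : forall m n (h : fun_state M N (m, n)) (c : st M m),
            ze (existT _ (m, n) h) \/ ze' (existT _ (m, n) h) ->
            al (existT _ m c) -> app ze al (existT _ n (proj1_sig h c))).
  { intros m n h c [Hh | Hh] Hc; [| apply (Happ _ Hal)];
      exists m, n, h, c; auto. }
  exact (app_coherent F HF HD M N (fs_prefactor _ N) ze al ze_cons (proj1 Hal)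
           _ _ (in_app _ _ f' a' Hf' Ha') (in_app _ _ f a Hf Ha) Hjj').
Qed.

Theorem lemma2p13 (F : Fam) (HF : Fam_ok F) (HD : condD F)
  (I J : DirSet) (M : FactorSystem I) (N : FactorSystem J)
  (ze ze' : elt (FunSpace M N) -> Prop) :
  is_elem F (FunSpace M N) ze ->
  is_elem F (FunSpace M N) ze' ->
  (forall al : elt M -> Prop, is_elem F M al ->
     forall x, app ze al x <-> app ze' al x) ->
  forall z, ze z <-> ze' z.
Proof.
  intros Hze Hze' Happ z. split; intro Hz.
  - apply (elem_absorbs F HF _ ze' ze Hze'); [| exact Hz].
    apply (funspace_union_coherent F HF HD M N ze ze' (proj1 Hze)).
    intros al Hal x. apply (Happ al Hal x).
  - apply (elem_absorbs F HF _ ze ze' Hze); [| exact Hz].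
    apply (funspace_union_coherent F HF HD M N ze' ze (proj1 Hze')).
    intros al Hal x. apply (Happ al Hal x).
Qed.
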